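(* Let $M$ be a pointed metric space and let $\mathcal U$ be an ultrafilter. Then $\mathcal F(M_{\mathcal U})$ is finitely representable in $\mathcal F(M)$.
   Context: Ultrapower of a metric space: for an ultrafilter $\mathcal U$ on a set $I$ and a metric space $(M,d)$ with base point $0$, let $\ell_\infty(M)=\{(x_i)_{i\in I}\in M^I:\sup_i d(x_i,0)<\infty\}$ with pseudometric $d((x_i),(y_i))=\lim_{\mathcal U,i}d(x_i,y_i)$; $M_{\mathcal U}$ is the metric quotient identifying points at distance $0$, pointed by the class of the constant sequence $0$. For a pointed metric space $M$, $\mathrm{Lip}_0(M)$ is the Banach space of real Lipschitz functions vanishing at the base point normed by the Lipschitz constant, and the Lipschitz-free space is $\mathcal F(M)=\overline{\mathrm{span}}\{\delta(x):x\in M\}\subset\mathrm{Lip}_0(M)^*$, $\delta(x)$ being evaluation at $x$. A Banach space $X$ is finitely representable in a Banach space $Y$ if for every finite-dimensional subspace $E$ of $X$ and every $\varepsilon>0$ there is a finite-dimensional subspace $F$ of $Y$ with Banach–Mazur distance $d(E,F)\leq 1+\varepsilon$. *)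

From HB Require Import structures.
From mathcomp Require Import all_boot all_order all_algebra.
From mathcomp Require Import all_classical all_reals.
Set Implicit Arguments. Unset Strict Implicit. Unset Printing Implicit Defensive.
Import Order.TTheory GRing.Theory Num.Theory.
Local Open Scope classical_set_scope.
Local Open Scope ring_scope.

Section Metric.
Variables (R : realType) (M : Type).

Definition is_metric (d : M -> M -> R) : Prop :=
  [/\ forall x y, 0 <= d x y,
      forall x y, d x y = 0 <-> x = y,
      forall x y, d x y = d y x &
      forall x y z, d x z <= d x y + d y z].

Variables (d : M -> M -> R) (m0 : M).

Definition lip0 (f : M -> R) : Prop :=
  f m0 = 0 /\ exists L : R, forall x y, `|f x - f y| <= L * d x y.

Definition lip0_ball (f : M -> R) : Prop :=
  f m0 = 0 /\ forall x y, `|f x - f y| <= d x y.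

(** Elements of Lip_0(M)^* are encoded as functionals on all of M -> R that
    vanish outside Lip_0(M) (the canonical representative of a functional on
    Lip_0(M)), linear on Lip_0(M) and bounded. *)
Definition lip0_dual (phi : (M -> R) -> R^o) : Prop :=
  [/\ forall f, ~ lip0 f -> phi f = 0,
      forall (a : R) f g, lip0 f -> lip0 g ->
        phi (fun x => a * f x + g x) = a * phi f + phi g &
      exists C : R, forall f, lip0_ball f -> `|phi f| <= C].

Definition dual_norm (phi : (M -> R) -> R^o) : R :=
  sup [set `|phi f| | f in lip0_ball].

Definition delta (x : M) : (M -> R) -> R :=
  fun f => if `[< lip0 f >] then f x else 0.

Definition span_delta (phi : (M -> R) -> R^o) : Prop :=
  exists (n : nat) (c : 'I_n -> R) (x : 'I_n -> M),
    phi = fun f => \sum_(i < n) c i * delta (x i) f.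

Definition free_space : set ((M -> R) -> R^o) :=
  [set phi | lip0_dual phi /\
     forall e : R, 0 < e -> exists psi, span_delta psi /\
        dual_norm (fun f => phi f - psi f) < e].

End Metric.

Section Ultrapower.
Variables (R : realType) (M : Type) (d : M -> M -> R) (m0 : M).
Variables (I : Type) (U : set (set I)).

Definition is_ultrafilter : Prop :=
  [/\ U setT, ~ U set0,
      forall A B, U A -> A `<=` B -> U B,
      forall A B, U A -> U B -> U (A `&` B) &
      forall A, U A \/ U (~` A)].

Definition linf (x : I -> M) : Prop := exists B : R, forall i, d (x i) m0 <= B.

Definition ulim (a : I -> R) : R :=
  xget 0 [set l | forall e : R, 0 < e -> U [set i | `|a i - l| < e]].

Definition upseudo (x y : I -> M) : R := ulim (fun i => d (x i) (y i)).

Definition ultrapower : Type :=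
  { S : set (I -> M) | exists x, linf x /\ S = [set y | linf y /\ upseudo x y = 0] }.

Definition urep (c : ultrapower) : I -> M := projT1 (cid (proj2_sig c)).

Definition udist (a b : ultrapower) : R := upseudo (urep a) (urep b).

Lemma linf_cst : linf (fun _ => m0).
Proof. by exists (d m0 m0) => i; rewrite lexx. Qed.

Definition ubase : ultrapower :=
  exist _ [set y | linf y /\ upseudo (fun _ => m0) y = 0]
    (ex_intro _ (fun _ => m0) (conj linf_cst erefl)).

End Ultrapower.

Section FinRep.
Variable (R : realType).

Definition lspan (V : lmodType R) (n : nat) (e : 'I_n -> V) : set V :=
  [set v | exists c : 'I_n -> R, v = \sum_(i < n) c i *: e i].

Definition fd_subspace (V : lmodType R) (X E : set V) : Prop :=
  exists (n : nat) (e : 'I_n -> V), (forall i, X (e i)) /\ E = lspan e.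

(** Banach–Mazur distance d(E,F) <= c, i.e. inf ||T|| ||T^-1|| <= c over
    linear isomorphisms T : E -> F *)
Definition bm_dist_le (V W : lmodType R) (nV : V -> R) (nW : W -> R)
    (E : set V) (F : set W) (c : R) : Prop :=
  forall c' : R, c < c' -> exists T : V -> W,
    [/\ forall (a : R) x y, E x -> E y -> T (a *: x + y) = a *: T x + T y,
        forall x y, E x -> E y -> T x = T y -> x = y,
        T @` E = F &
        exists a b : R, [/\ 0 <= a, 0 <= b, a * b <= c',
          forall x, E x -> nW (T x) <= a * nV x &
          forall x, E x -> nV x <= b * nW (T x)]].

Definition fin_rep (V W : lmodType R) (X : set V) (nX : V -> R)
    (Y : set W) (nY : W -> R) : Prop :=
  forall E, fd_subspace X E -> forall eps : R, 0 < eps ->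
    exists F, fd_subspace Y F /\ bm_dist_le nX nY E F (1 + eps).

End FinRep.

(* Finitely many points of M_U, together with the base point, are
   (1 + eta)-bi-Lipschitz to their i-th coordinates in M for U-many indices i.
   A K-Lipschitz map between finite pointed sets increases the free-space norm
   of a finitely supported element by at most the factor K, since a 1-Lipschitz
   function on the target pulls back, by McShane's inf-convolution extension, to
   a K-Lipschitz one on the source.  Given a finite-dimensional subspace of
   F(M_U), approximate the vectors of a basis by finitely supported elements,
   with an error that is small relative to the norm of every combination by
   the equivalence of norms in finite dimension, and move all their atoms to M
   through one good coordinate. *)

From HB Require Import structures.
From mathcomp Require Import all_boot all_order all_algebra.
From mathcomp Require Import all_classical all_reals.
From mathcomp Require Import topology normedtype derive.
From mathcomp Require Import ring lra.
Import Order.TTheory GRing.Theory Num.Theory.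
Import numFieldNormedType.Exports.
Local Open Scope classical_set_scope.
Local Open Scope ring_scope.
Set Implicit Arguments. Unset Strict Implicit. Unset Printing Implicit Defensive.

Section MetricFacts.
Variables (R : realType) (X : Type) (d : X -> X -> R).
Hypothesis hd : is_metric d.

Lemma metric_ge0 x y : 0 <= d x y. Proof. by case: hd. Qed.
Lemma metric_sym x y : d x y = d y x. Proof. by case: hd. Qed.
Lemma metric_triangle x y z : d x z <= d x y + d y z. Proof. by case: hd. Qed.
Lemma metric_eq0 x y : d x y = 0 <-> x = y. Proof. by case: hd. Qed.
Lemma metric_xx x : d x x = 0. Proof. exact/metric_eq0. Qed.

Lemma metric_dist_lipschitz x y x' y' : `|d x y - d x' y'| <= d x x' + d y y'.
Proof.
have := metric_triangle x x' y; have := metric_triangle x' y' y.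
have := metric_triangle x' x y'; have := metric_triangle x y y'.
rewrite (metric_sym x' x) (metric_sym y' y) ler_norml; move=> *; apply/andP; split; lra.
Qed.

End MetricFacts.

Section Ultrafilter.
Variables (R : realType) (I : Type) (U : set (set I)).
Hypothesis hU : is_ultrafilter U.

Lemma ultraT : U setT. Proof. by case: hU. Qed.

Lemma ultra_sub A B : U A -> A `<=` B -> U B.
Proof. by case: hU => _ _ h _ _; apply: h. Qed.

Lemma ultraI A B : U A -> U B -> U (A `&` B).
Proof. by case: hU => _ _ _ h _; apply: h. Qed.

Lemma ultra_all (A : set I) : (forall i, A i) -> U A.
Proof. by move=> hA; apply: ultra_sub ultraT _. Qed.

Lemma ultraC A : U A \/ U (~` A). Proof. by case: hU. Qed.

Lemma ultra_neq0 A : U A -> exists i, A i.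
Proof.
move=> UA; apply: contrapT => A0; case: hU => _ U0 _ _ _; apply: U0.
by rewrite -(_ : A = set0) //; apply/seteqP; split => // i Ai; apply: A0; exists i.
Qed.

Lemma ultra_bigI (J : finType) (A : J -> set I) : (forall j, U (A j)) ->
  U [set i | forall j, A j i].
Proof.
move=> UA; suff /(_ (enum J)) : forall s : seq J, U [set i | forall j, j \in s -> A j i].
  by move=> /ultra_sub; apply=> i Ai j; apply: Ai; rewrite mem_enum.
elim=> [|j s IH]; first exact: ultra_all.
apply: ultra_sub (ultraI (UA j) IH) _ => i [Aji Asi] k.
by rewrite inE => /predU1P[->|/Asi].
Qed.

Definition bounded_family (a : I -> R) := exists B, forall i, `|a i| <= B.

Lemma ulim_cvg (a : I -> R) : bounded_family a ->
  forall e : R, 0 < e -> U [set i | `|a i - ulim U a| < e].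
Proof.
move=> [B aB].
suff [l al] : exists l, forall e : R, 0 < e -> U [set i | `|a i - l| < e].
  by rewrite /ulim; case: xgetP => [_ -> //|nl]; case: (nl l).
(* l is the supremum of the thresholds that [a] exceeds U-almost surely. *)
pose S := [set t : R | U [set i | t <= a i]].
have hS : has_sup S.
  split.
    exists (- B); apply: ultra_all => i /=.
    by have := aB i; rewrite ler_norml => /andP[].
  exists (B + 1) => t St; rewrite leNgt; apply/negP => Bt.
  have [i /= ti] := ultra_neq0 St; have := aB i; rewrite ler_norml => /andP[_]; lra.
exists (sup S) => e e0.
have e20 : 0 < e / 2 by rewrite divr_gt0.
have [t St ht] := sup_adherent e20 hS.
have [|Uc] := ultraC [set i | sup S + e / 2 <= a i].
  by move=> /(sup_upper_bound hS); lra.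
apply: ultra_sub (ultraI St Uc) _ => i [/= ti /negP]; rewrite -ltNge => ai.
by rewrite ltr_norml; apply/andP; split; lra.
Qed.

Lemma ulim_unique (a : I -> R) l : bounded_family a ->
  (forall e : R, 0 < e -> U [set i | `|a i - l| < e]) -> ulim U a = l.
Proof.
move=> /ulim_cvg al' al; apply/eqP; rewrite -subr_eq0 -normr_le0.
apply/ler_addgt0Pr => e e0; rewrite add0r.
have e20 : 0 < e / 2 by rewrite divr_gt0.
have [i [/= hi hi']] := ultra_neq0 (ultraI (al' _ e20) (al _ e20)).
by have := ler_distD (a i) (ulim U a) l; rewrite [`|ulim U a - a i|]distrC; lra.
Qed.

Lemma ulimC (c : R) : ulim U (fun=> c) = c.
Proof.
apply: ulim_unique; first by exists `|c|.
by move=> e e0; apply: ultra_all => i /=; rewrite subrr normr0.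
Qed.

Lemma bounded_familyD (a b : I -> R) : bounded_family a -> bounded_family b ->
  bounded_family (fun i => a i + b i).
Proof.
move=> [A aA] [B bB]; exists (A + B) => i.
by apply: le_trans (ler_normD _ _) _; apply: lerD.
Qed.

Lemma ulimD (a b : I -> R) : bounded_family a -> bounded_family b ->
  ulim U (fun i => a i + b i) = ulim U a + ulim U b.
Proof.
move=> ba bb; apply: ulim_unique; first exact: bounded_familyD.
move=> e e0; have e20 : 0 < e / 2 by rewrite divr_gt0.
apply: ultra_sub (ultraI (ulim_cvg ba e20) (ulim_cvg bb e20)) _ => i [/= ha hb].
rewrite opprD addrACA; apply: le_lt_trans (ler_normD _ _) _; lra.
Qed.

Lemma ler_ulim (a b : I -> R) : bounded_family a -> bounded_family b ->
  (forall i, a i <= b i) -> ulim U a <= ulim U b.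
Proof.
move=> ba bb ab; rewrite leNgt; apply/negP => ba_lt.
pose e := (ulim U a - ulim U b) / 2.
have e0 : 0 < e by rewrite divr_gt0 // subr_gt0.
have [i [/= ha hb]] := ultra_neq0 (ultraI (ulim_cvg ba e0) (ulim_cvg bb e0)).
move: ha hb; rewrite !ltr_norml /e => /andP[? ?] /andP[? ?].
by have := ab i; lra.
Qed.

End Ultrafilter.

Section UltrapowerMetric.
Variables (R : realType) (M : Type) (d : M -> M -> R) (m0 : M).
Hypothesis hd : is_metric d.
Variables (I : Type) (U : set (set I)).
Hypothesis hU : is_ultrafilter U.

Local Notation linf := (@linf R M d m0 I).
Local Notation up := (@upseudo R M d I U).
Local Notation UP := (@ultrapower R M d m0 I U).
Local Notation ud := (@udist R M d m0 I U).
Local Notation ub := (@ubase R M d m0 I U).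

Lemma linf_bounded_dist x y : linf x -> linf y ->
  bounded_family (fun i => d (x i) (y i)).
Proof.
move=> [A xA] [B yB]; exists (A + B) => i; rewrite ger0_norm ?metric_ge0 //.
apply: le_trans (metric_triangle hd _ m0 _) _.
by apply: lerD; rewrite // metric_sym.
Qed.

Lemma urep_spec (a : UP) :
  linf (urep a) /\ proj1_sig a = [set y | linf y /\ up (urep a) y = 0].
Proof. exact: projT2 (cid (proj2_sig a)). Qed.

Lemma upseudo_xx x : up x x = 0.
Proof.
rewrite /upseudo (_ : (fun i => d (x i) (x i)) = fun=> 0) ?ulimC //.
by apply/funext => i; rewrite metric_xx.
Qed.

Lemma upseudo_sym x y : up x y = up y x.
Proof. by rewrite /upseudo; congr ulim; apply/funext => i; rewrite metric_sym. Qed.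

Lemma upseudo_triangle x y z : linf x -> linf y -> linf z ->
  up x z <= up x y + up y z.
Proof.
move=> lx ly lz; rewrite /upseudo -ulimD //; try exact: linf_bounded_dist.
apply: ler_ulim => //; first exact: linf_bounded_dist.
  by apply: bounded_familyD; exact: linf_bounded_dist.
by move=> i; exact: metric_triangle.
Qed.

Lemma upseudo_ge0 x y : linf x -> linf y -> 0 <= up x y.
Proof.
move=> lx ly; rewrite -(ulimC hU 0); apply: ler_ulim => //.
- by exists 0 => i; rewrite normr0.
- exact: linf_bounded_dist.
- by move=> i; exact: metric_ge0.
Qed.

Lemma udist_metric : is_metric ud.
Proof.
have lrep a := (urep_spec a).1.
split => [a b|a b|a b|a b c]; last 2 first.
- exact: upseudo_sym.
- exact: upseudo_triangle.
- exact: upseudo_ge0.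
split => [ab0|->]; last exact: upseudo_xx.
suff : proj1_sig a = proj1_sig b.
  case: a {ab0} => Sa pa; case: b => Sb pb /= ?; subst Sb.
  by congr exist; exact: Prop_irrelevance.
have eq_ball x y : linf x -> linf y -> up x y = 0 -> forall z, linf z ->
    up y z = 0 -> up x z = 0.
  move=> lx ly xy0 z lz yz0; apply/eqP; rewrite eq_le upseudo_ge0 // andbT.
  by rewrite -[leRHS](addr0 0) -{1}xy0 -yz0 upseudo_triangle.
rewrite (urep_spec a).2 (urep_spec b).2; apply/seteqP; split => z [lz z0]; split => //.
  by apply: eq_ball (lrep b) (lrep a) _ _ lz z0; rewrite upseudo_sym.
exact: eq_ball (lrep a) (lrep b) ab0 _ lz z0.
Qed.

Lemma upseudo_urep_base : up (fun=> m0) (urep ub) = 0.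
Proof.
have [_ ubE] := urep_spec ub.
suff : proj1_sig ub (urep ub) by case.
by rewrite ubE; split; [exact: (urep_spec ub).1 | exact: upseudo_xx].
Qed.

(* The base point is sent exactly to [m0], not merely to a sequence at
   U-distance 0 from it. *)
Definition ucoord (i : I) (a : UP) : M := if `[< a = ub >] then m0 else urep a i.

Lemma ucoord_base i : ucoord i ub = m0.
Proof. by rewrite /ucoord asboolT. Qed.

Lemma ucoord_near_urep a e : 0 < e -> U [set i | d (ucoord i a) (urep a i) < e].
Proof.
move=> e0; rewrite /ucoord; case: (pselect (a = ub)) => [->|nab]; last first.
  by rewrite asboolF //; apply: (ultra_all hU) => i /=; rewrite metric_xx.
rewrite asboolT //.
have := ulim_cvg hU (linf_bounded_dist (@linf_cst R M d m0 I) (urep_spec ub).1) e0.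
rewrite -/(up _ _) upseudo_urep_base; move=> /(ultra_sub hU); apply=> i /=.
by rewrite subr0 ger0_norm ?metric_ge0.
Qed.

Lemma ucoord_cvg a b e : 0 < e ->
  U [set i | `|d (ucoord i a) (ucoord i b) - ud a b| < e].
Proof.
move=> e0; have e30 : 0 < e / 3 by rewrite divr_gt0.
have rep_cvg := ulim_cvg hU (linf_bounded_dist (urep_spec a).1 (urep_spec b).1) e30.
apply: (ultra_sub hU) (ultraI hU (ucoord_near_urep a e30)
  (ultraI hU (ucoord_near_urep b e30) rep_cvg)) _ => i [/= ha [hb hab]].
have := metric_dist_lipschitz hd (ucoord i a) (ucoord i b) (urep a i) (urep b i).
have := ler_distD (d (urep a i) (urep b i)) (d (ucoord i a) (ucoord i b)) (ud a b).
rewrite /udist /upseudo; lra.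
Qed.

Lemma ucoord_almost_isometry (J : finType) (P : J -> UP) (eta : R) : 0 < eta ->
  exists i, forall a b : J,
    d (ucoord i (P a)) (ucoord i (P b)) <= (1 + eta) * ud (P a) (P b) /\
    ud (P a) (P b) <= (1 + eta) * d (ucoord i (P a)) (ucoord i (P b)).
Proof.
move=> eta0.
suff /(ultra_bigI hU) /(ultra_neq0 hU) [i hi] : forall ab : J * J, U [set i |
    d (ucoord i (P ab.1)) (ucoord i (P ab.2)) <= (1 + eta) * ud (P ab.1) (P ab.2) /\
    ud (P ab.1) (P ab.2) <= (1 + eta) * d (ucoord i (P ab.1)) (ucoord i (P ab.2))].
  by exists i => a b; exact: (hi (a, b)).
move=> [a b] /=; case: (pselect (P a = P b)) => [->|nab].
  by apply: (ultra_all hU) => i /=; rewrite !metric_xx ?mulr0 //; exact: udist_metric.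
have u0 : 0 < ud (P a) (P b).
  rewrite lt_def metric_ge0 ?andbT; last exact: udist_metric.
  by apply/eqP => /(metric_eq0 udist_metric).
(* relative error eta / (1 + eta) in the U-limit gives both inequalities *)
pose e := eta * ud (P a) (P b) / (1 + eta).
have e0 : 0 < e by rewrite divr_gt0 ?mulr_gt0 //; lra.
have ee : e * (1 + eta) = eta * ud (P a) (P b) by rewrite /e divfK // gt_eqF // addr_gt0.
apply: (ultra_sub hU) (ucoord_cvg (P a) (P b) e0) _ => i /=.
by rewrite ltr_norml => /andP[? ?]; split; nra.
Qed.

End UltrapowerMetric.

Section DualNorm.
Variables (R : realType) (X : Type) (dX : X -> X -> R) (x0 : X).
Hypothesis hX : is_metric dX.

Local Notation V := ((X -> R) -> R^o).
Local Notation N := (dual_norm dX x0).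
Local Notation ball := (lip0_ball dX x0).
Implicit Types (phi psi : V) (f : X -> R).

Definition dual_bounded phi := exists C, forall f, ball f -> `|phi f| <= C.

Definition molecule (J : finType) (c : J -> R) (x : J -> X) : V :=
  fun f => \sum_j c j * delta dX x0 (x j) f.

Lemma dual_sumE (J : finType) (c : J -> R) (phi : J -> V) f :
  (\sum_j c j *: phi j) f = \sum_j c j * phi j f.
Proof. by rewrite fct_sumE. Qed.

Lemma lip0_ball0 : ball (fun=> 0).
Proof. by split => // x y; rewrite subrr normr0 metric_ge0. Qed.

Lemma lip0_ball_lip0 f : ball f -> lip0 dX x0 f.
Proof. by case=> f0 fL; split => //; exists 1 => x y; rewrite mul1r. Qed.

Lemma lip0_ball_le f x : ball f -> `|f x| <= dX x x0.
Proof. by case=> f0 /(_ x x0); rewrite f0 subr0. Qed.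

Lemma delta_ball x f : ball f -> delta dX x0 x f = f x.
Proof. by move=> /lip0_ball_lip0 lf; rewrite /delta asboolT. Qed.

Lemma lip0_comb (a : R) f g : lip0 dX x0 f -> lip0 dX x0 g ->
  lip0 dX x0 (fun z => a * f z + g z).
Proof.
move=> [f0 [Lf fL]] [g0 [Lg gL]]; split; first by rewrite f0 g0 mulr0 addr0.
exists (`|a| * Lf + Lg) => x y; rewrite opprD addrACA -mulrBr.
apply: le_trans (ler_normD _ _) _; rewrite normrM mulrDl -mulrA.
by apply: lerD => //; apply: ler_wpM2l.
Qed.

Lemma dual_norm_set_neq0 phi : [set `|phi f| | f in ball] !=set0.
Proof. by exists `|phi (fun=> 0)|, (fun=> 0); last by []; exact: lip0_ball0. Qed.

Lemma dual_norm_has_sup phi : dual_bounded phi -> has_sup [set `|phi f| | f in ball].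
Proof.
case=> C phiC; split; first exact: dual_norm_set_neq0.
by exists C => _ [f bf <-]; exact: phiC.
Qed.

Lemma le_dual_norm phi f : dual_bounded phi -> ball f -> `|phi f| <= N phi.
Proof. by move=> /dual_norm_has_sup phi_sup bf; apply: sup_upper_bound => //; exists f. Qed.

Lemma dual_norm_le phi C : (forall f, ball f -> `|phi f| <= C) -> N phi <= C.
Proof.
move=> phiC; apply: ge_sup; first exact: dual_norm_set_neq0.
by move=> _ [f bf <-]; exact: phiC.
Qed.

Lemma dual_norm_ge0 phi : dual_bounded phi -> 0 <= N phi.
Proof. by move=> /le_dual_norm/(_ lip0_ball0); apply: le_trans. Qed.

Lemma dual_norm0 : N 0 = 0.
Proof.
apply/eqP; rewrite eq_le dual_norm_ge0 ?andbT; last by exists 0 => f _; rewrite normr0.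
by apply: dual_norm_le => f _; rewrite normr0.
Qed.

Lemma dual_boundedD phi psi : dual_bounded phi -> dual_bounded psi ->
  dual_bounded (phi + psi).
Proof.
move=> [A phiA] [B psiB]; exists (A + B) => f bf.
by apply: le_trans (ler_normD _ _) _; apply: lerD; [exact: phiA | exact: psiB].
Qed.

Lemma dual_boundedZ (t : R) phi : dual_bounded phi -> dual_bounded (t *: phi).
Proof.
move=> [A phiA]; exists (`|t| * A) => f bf; rewrite /= normrM.
by apply: ler_wpM2l => //; exact: phiA.
Qed.

Lemma dual_boundedB phi psi : dual_bounded phi -> dual_bounded psi ->
  dual_bounded (phi - psi).
Proof. by move=> bphi bpsi; rewrite -scaleN1r; apply/dual_boundedD/dual_boundedZ. Qed.

Lemma dual_bounded_sum (J : finType) (c : J -> R) (phi : J -> V) :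
  (forall j, dual_bounded (phi j)) -> dual_bounded (\sum_j c j *: phi j).
Proof.
move=> bphi; elim/big_ind: _ => [|? ?|j _]; last exact: dual_boundedZ.
- by exists 0 => f _; rewrite normr0.
- exact: dual_boundedD.
Qed.

Lemma ler_dual_normD phi psi : dual_bounded phi -> dual_bounded psi ->
  N (phi + psi) <= N phi + N psi.
Proof.
move=> bphi bpsi; apply: dual_norm_le => f bf.
by apply: le_trans (ler_normD _ _) _; apply: lerD; apply: le_dual_norm.
Qed.

Lemma ler_dual_normZ (t : R) phi : dual_bounded phi -> N (t *: phi) <= `|t| * N phi.
Proof.
move=> bphi; apply: dual_norm_le => f bf; rewrite /= normrM.
by apply: ler_wpM2l => //; apply: le_dual_norm.
Qed.

Lemma dual_normZ (t : R) phi : dual_bounded phi -> N (t *: phi) = `|t| * N phi.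
Proof.
move=> bphi; apply/eqP; rewrite eq_le ler_dual_normZ //=.
have [->|t0] := eqVneq t 0.
  by rewrite normr0 mul0r; apply/dual_norm_ge0/dual_boundedZ.
rewrite -ler_pdivlMl ?normr_gt0 // -normrV ?unitfE //.
rewrite -{1}[phi](scale1r) -(mulVf t0) -scalerA ler_dual_normZ //.
exact: dual_boundedZ.
Qed.

Lemma ler_dual_norm_sum (J : finType) (c : J -> R) (phi : J -> V) :
  (forall j, dual_bounded (phi j)) -> N (\sum_j c j *: phi j) <= \sum_j `|c j| * N (phi j).
Proof.
move=> bphi; apply: dual_norm_le => f bf; rewrite dual_sumE.
apply: le_trans (ler_norm_sum _ _ _) _; apply: ler_sum => j _.
by rewrite normrM; apply: ler_wpM2l => //; exact: le_dual_norm.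
Qed.

Lemma ler_dist_dual_norm phi psi : dual_bounded phi -> dual_bounded psi ->
  `|N phi - N psi| <= N (phi - psi).
Proof.
move=> bphi bpsi; have bB := dual_boundedB bphi bpsi.
have := ler_dual_normD bB bpsi; rewrite subrK.
have := ler_dual_normD (dual_boundedB bpsi bphi) bphi.
rewrite subrK -opprB -scaleN1r dual_normZ // normrN1 mul1r.
by rewrite ler_norml; move=> *; apply/andP; split; lra.
Qed.

Lemma lip0_dual_bounded phi : lip0_dual dX x0 phi -> dual_bounded phi.
Proof. by case. Qed.

Lemma lip0_dual_sum (J : finType) (c : J -> R) (phi : J -> V) :
  (forall j, lip0_dual dX x0 (phi j)) -> lip0_dual dX x0 (\sum_j c j *: phi j).
Proof.
move=> dphi; split.
- move=> f nf; rewrite dual_sumE big1 // => j _.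
  by case: (dphi j) => out _ _; rewrite out ?mulr0.
- move=> a f g lf lg; rewrite !dual_sumE mulr_sumr -big_split /=.
  by apply: eq_bigr => j _; case: (dphi j) => _ -> // _; ring.
- exact/dual_bounded_sum/(fun j => lip0_dual_bounded (dphi j)).
Qed.

Lemma dual_norm_eq0 phi : lip0_dual dX x0 phi -> N phi = 0 -> phi = 0.
Proof.
move=> dphi N0; case: (dphi) => phi_out phi_lin bphi.
have lip0_0 : lip0 dX x0 (fun=> 0) by apply: lip0_ball_lip0; exact: lip0_ball0.
have phi0 : phi (fun=> 0) = 0.
  have := phi_lin (-1) _ _ lip0_0 lip0_0.
  rewrite (_ : (fun=> _) = fun=> 0); last by apply/funext => z; rewrite mulr0 addr0.
  by rewrite mulN1r addNr.
apply/funext => f /=; have [lf|/phi_out //] := pselect (lip0 dX x0 f).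
case: (lf) => f0 [L fL].
(* rescale [f] into the unit ball, where [phi] vanishes *)
pose k := (`|L| + 1)^-1.
have k0 : 0 < k by rewrite invr_gt0 ltr_pwDr.
have bkf : ball (fun z => k * f z + 0).
  split => [|x y]; first by rewrite f0 mulr0 addr0.
  rewrite !addr0 -mulrBr normrM gtr0_norm // ler_pdivrMl ?ltr_pwDr //.
  apply: le_trans (fL x y) _; apply: ler_wpM2r; first exact: metric_ge0.
  by rewrite (le_trans (ler_norm L)) // lerDl.
have := le_dual_norm bphi bkf; rewrite N0 normr_le0 phi_lin // phi0 addr0.
by rewrite mulf_eq0 gt_eqF //= => /eqP.
Qed.

Lemma molecule_bounded (J : finType) (c : J -> R) (x : J -> X) :
  dual_bounded (molecule c x).
Proof.
exists (\sum_j `|c j| * dX (x j) x0) => f bf.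
apply: le_trans (ler_norm_sum _ _ _) _; apply: ler_sum => j _.
by rewrite normrM delta_ball //; apply: ler_wpM2l => //; exact: lip0_ball_le.
Qed.

Lemma molecule_free n (c : 'I_n -> R) (x : 'I_n -> X) : free_space dX x0 (molecule c x).
Proof.
split; last first.
  move=> e e0; exists (molecule c x); split; first by exists n, c, x.
  by apply: le_lt_trans e0; apply: dual_norm_le => f _; rewrite subrr normr0.
split; last exact: molecule_bounded.
  by move=> f nf; apply: big1 => i _; rewrite /delta asboolF ?mulr0.
move=> a f g lf lg; rewrite /molecule mulr_sumr -big_split /=; apply: eq_bigr => i _.
by rewrite /delta !asboolT //; [ring | exact: lip0_comb].
Qed.

Lemma molecule_sum m (r : 'I_m -> nat) (a : 'I_m -> R)
    (c : forall k, 'I_(r k) -> R) (x : forall k, 'I_(r k) -> X) :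
  \sum_k a k *: molecule (c k) (x k) =
  molecule (fun t : {k : 'I_m & 'I_(r k)} => a (tag t) * c (tag t) (tagged t))
           (fun t => x (tag t) (tagged t)).
Proof.
apply/funext => f; rewrite dual_sumE /molecule.
rewrite (eq_bigr (fun k => \sum_(j < r k) a k * c k j * delta dX x0 (x k j) f)).
  by rewrite (sig_big_dep xpredT (fun _ => xpredT)).
by move=> k _; rewrite mulr_sumr; apply: eq_bigr => j _; rewrite mulrA.
Qed.

Lemma dual_norm_sum_perturb m (a : 'I_m -> R) (phi psi : 'I_m -> V) (e : R) :
  (forall k, dual_bounded (phi k)) -> (forall k, dual_bounded (psi k)) ->
  (forall k, N (phi k - psi k) <= e) ->
  N (\sum_k a k *: phi k - \sum_k a k *: psi k) <= e * \sum_k `|a k|.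
Proof.
move=> bphi bpsi phi_psi; rewrite -sumrB.
under eq_bigr do rewrite -scalerBr.
apply: le_trans (ler_dual_norm_sum _ (fun k => dual_boundedB (bphi k) (bpsi k))) _.
by rewrite mulr_sumr; apply: ler_sum => k _; rewrite [leRHS]mulrC ler_wpM2l.
Qed.

End DualNorm.

Section MoleculeTransfer.
Variables (R : realType) (X Y : Type) (dX : X -> X -> R) (dY : Y -> Y -> R).
Variables (x0 : X) (y0 : Y).
Hypotheses (hX : is_metric dX) (hY : is_metric dY).

Lemma molecule_transfer (J : finType) (P : option J -> X) (Q : option J -> Y)
    (c : J -> R) (K : R) :
  P None = x0 -> Q None = y0 -> 0 < K ->
  (forall o o', dY (Q o) (Q o') <= K * dX (P o) (P o')) ->
  dual_norm dY y0 (molecule dY y0 c (Q \o Some)) <=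
  K * dual_norm dX x0 (molecule dX x0 c (P \o Some)).
Proof.
move=> P0 Q0 K0 QP; apply: (dual_norm_le hY) => f bf.
have [f0 fL] := bf.
(* McShane's inf-convolution extension of [f \o Q / K] from the points [P o] *)
pose h x := \big[Num.min/dX x x0]_o (f (Q o) / K + dX x (P o)).
have hP o : h (P o) = f (Q o) / K.
  have fQ o' : f (Q o) / K <= f (Q o') / K + dX (P o) (P o').
    rewrite -lerBlDl -mulrBl ler_pdivrMr // mulrC.
    exact: le_trans (ler_norm _) (le_trans (fL _ _) (QP _ _)).
  apply: le_anti; apply/andP; split.
    by apply: le_trans (bigmin_le _ o _) _; rewrite metric_xx // addr0.
  apply: le_bigmin => [|o' _]; last exact: fQ.
  by have := fQ None; rewrite P0 Q0 f0 mul0r add0r.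
have h_lip x y : h x <= h y + dX x y.
  rewrite -lerBlDr; apply: le_bigmin => [|o _]; rewrite lerBlDr.
    by apply: le_trans (bigmin_le_id _ _ _ _) _; rewrite addrC metric_triangle.
  apply: le_trans (bigmin_le _ o _) _.
  by rewrite -addrA lerD2l addrC metric_triangle.
have bh : lip0_ball dX x0 h.
  split => [|x y]; first by rewrite -P0 hP Q0 f0 mul0r.
  have := h_lip x y; have := h_lip y x; rewrite (metric_sym hX y x) ler_norml.
  by move=> *; apply/andP; split; lra.
have := le_dual_norm hX (molecule_bounded dX x0 c (P \o Some)) bh.
rewrite /molecule (eq_bigr (fun j => c j * f (Q (Some j)) / K)); last first.
  by move=> j _; rewrite delta_ball //= hP mulrA.
rewrite -mulr_suml normrM [`|K^-1|]gtr0_norm ?invr_gt0 // ler_pdivrMr // mulrC.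
by apply: le_trans; under eq_bigr do rewrite delta_ball //.
Qed.

End MoleculeTransfer.

Section FiniteDimension.
Variable R : realType.

Lemma rV_coef_le_norm n (u : 'rV[R]_n) k : `|u ord0 k| <= `|u|.
Proof.
by rewrite [leRHS]/Num.norm /= mx_normrE; apply/bigmax_geP; right; exists (ord0, k).
Qed.

(* Compactness of the unit sphere: [F] attains a positive minimum on it. *)
Lemma rV_norm_le_mul_norm n (F : 'rV[R]_n -> R) (L : R) :
  (forall v w, `|F v - F w| <= L * `|v - w|) ->
  (forall t v, F (t *: v) = `|t| * F v) -> (forall v, 0 <= F v) ->
  (forall v, F v = 0 -> v = 0) ->
  exists K, 0 < K /\ forall v, `|v| <= K * F v.
Proof.
move=> FL FZ F0 Fdef.
pose S := [set v : 'rV[R]_n | `|v| = 1].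
have S_normalize v : v != 0 -> S (`|v|^-1 *: v).
  by move=> v0; rewrite /S /= normrZ normrV ?unitfE ?normr_eq0 // normr_id mulVf ?normr_eq0.
have [S0|noS] := pselect (S !=set0); last first.
  exists 1; split => // v; have [->|v0] := eqVneq v 0; first by rewrite normr0 mul1r.
  by case: noS; exists (`|v|^-1 *: v); exact: S_normalize.
have cS : compact S.
  apply: bounded_closed_compact.
    rewrite /= /bounded_near; near=> B => v /= ->; near: B.
    by apply: nbhs_pinfty_ge; rewrite num_real.
  apply: (@preimage_closed _ _ (fun v : 'rV[R]_n => `|v|) [set x | x = 1]).
    by move=> x _; apply: norm_continuous.
  exact: closed_eq.
have cF : continuous F.
  move=> x; have nx : ProperFilter (nbhs x) by apply: nbhs_pfilter.
  apply/cvgrPdist_lt => e e0.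
  have : \forall y \near x, `|x - y| < e / (`|L| + 1).
    by apply: (@cvgr_dist_lt _ _ _ _ nx id x cvg_id); rewrite divr_gt0 // ltr_pwDr.
  apply: filterS => y xy; apply: le_lt_trans (FL _ _) _.
  rewrite ltr_pdivlMr ?ltr_pwDr // in xy.
  apply: le_lt_trans xy; rewrite [leRHS]mulrC ler_wpM2r //.
  by rewrite (le_trans (ler_norm L)) // lerDl.
have [c Sc Fc] := EVT_min_rV S0 cS (continuous_subspaceT cF).
have c1 : `|c| = 1 by move: Sc; rewrite inE.
have Fc0 : 0 < F c.
  rewrite lt_def F0 andbT; apply/eqP => /Fdef c0.
  by move: c1; rewrite c0 normr0 => /eqP; rewrite eq_sym oner_eq0.
exists (F c)^-1; split => [|v]; first by rewrite invr_gt0.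
have [->|v0] := eqVneq v 0; first by rewrite normr0 mulr_ge0 ?F0 // invr_ge0 F0.
have Fv : F v = `|v| * F (`|v|^-1 *: v).
  by rewrite FZ normrV ?unitfE ?normr_eq0 // normr_id mulrA mulfV ?mul1r ?normr_eq0.
rewrite Fv mulrCA ler_peMr // mulrC ler_pdivlMr // mul1r.
by apply: Fc; rewrite inE; exact: S_normalize.
Unshelve. all: by end_near.
Qed.

Section Span.
Variable V : lmodType R.

Definition lfree n (b : 'I_n -> V) :=
  forall a : 'I_n -> R, \sum_k a k *: b k = 0 -> forall k, a k = 0.

Lemma lspan_basis (X : set V) n (e : 'I_n -> V) : (forall i, X (e i)) ->
  exists m (b : 'I_m -> V), [/\ forall k, X (b k), lspan e = lspan b & lfree b].
Proof.
elim: n e => [|n IH] e Xe; first by exists 0%N, e; split => // a _ [].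
have [free_e|] := pselect (lfree e); first by exists n.+1, e.
move=> /existsNP[a /not_implyP[a0 /existsNP[j /eqP aj]]].
pose e' i := e (lift j i).
have [m [b [Xb e'b free_b]]] := IH e' (fun i => Xe _).
exists m, b; split => //; rewrite -e'b.
have ej : e j = \sum_i (- (a (lift j i) / a j)) *: e' i.
  move/eqP: a0; rewrite (bigD1_ord j) //= addr_eq0 => /eqP ajE.
  apply: (scalerI aj); rewrite ajE scaler_sumr -sumrN; apply: eq_bigr => i _.
  by rewrite scalerA mulrN mulrC divfK // scaleNr.
apply/seteqP; split => v [c ->].
  exists (fun i => c (lift j i) + c j * (- (a (lift j i) / a j))).
  rewrite (bigD1_ord j) //= ej scaler_sumr addrC -big_split /=.
  by apply: eq_bigr => i _; rewrite scalerDl scalerA.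
exists (fun i => if unlift j i is Some k then c k else 0).
rewrite (bigD1_ord j) //= unlift_none scale0r add0r.
by apply: eq_bigr => i _; rewrite liftK.
Qed.

Lemma bm_dist_le_lspan (W : lmodType R) (nV : V -> R) (nW : W -> R)
    n (b : 'I_n -> V) (phi : 'I_n -> W) (alpha beta c : R) :
  lfree b -> nW 0 = 0 -> (forall v, lspan b v -> nV v <= 0 -> v = 0) ->
  0 <= alpha -> 0 <= beta -> alpha * beta <= c ->
  (forall a, nW (\sum_k a k *: phi k) <= alpha * nV (\sum_k a k *: b k)) ->
  (forall a, nV (\sum_k a k *: b k) <= beta * nW (\sum_k a k *: phi k)) ->
  bm_dist_le nV nW (lspan b) (lspan phi) c.
Proof.
move=> free_b nW0 nV_def alpha0 beta0 ab_c phi_b b_phi c' cc'.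
pose coord (v : V) : 'I_n -> R :=
  if pselect (exists a, v = \sum_k a k *: b k) is left h then projT1 (cid h) else fun=> 0.
have coordK a : coord (\sum_k a k *: b k) = a.
  rewrite /coord; case: pselect => [h|[]]; last by exists a.
  case: (cid h) => a' /= a'a; apply/funext => k; apply/eqP; rewrite -subr_eq0; apply/eqP.
  apply: (free_b (fun k => a' k - a k)); under eq_bigr do rewrite scalerBl.
  by rewrite sumrB -a'a subrr.
pose T (v : V) : W := \sum_k coord v k *: phi k.
have TE a : T (\sum_k a k *: b k) = \sum_k a k *: phi k by rewrite /T coordK.
have combE (Z : lmodType R) (t : R) (u : 'I_n -> Z) (x y : 'I_n -> R) :
    t *: \sum_k x k *: u k + \sum_k y k *: u k = \sum_k (t * x k + y k) *: u k.
  by rewrite scaler_sumr -big_split; apply: eq_bigr => k _; rewrite scalerDl scalerA.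
exists T; split.
- move=> t _ _ [x ->] [y ->].
  by rewrite combE !TE -combE.
- move=> _ _ [x ->] [y ->]; rewrite !TE => Txy.
  have := b_phi (fun k => x k - y k).
  rewrite !(eq_bigr _ (fun k _ => scalerBl _ _ _)) !sumrB Txy subrr nW0 mulr0.
  move=> /nV_def xy0; apply/eqP; rewrite -subr_eq0; apply/eqP/xy0.
  by exists (fun k => x k - y k); rewrite -sumrB; apply: eq_bigr => k _; rewrite scalerBl.
- apply/seteqP; split => [_ [_ [x ->] <-]|_ [y ->]]; first by exists x; rewrite TE.
  by exists (\sum_k y k *: b k); [exists y | rewrite TE].
- exists alpha, beta; split; rewrite ?(le_trans ab_c (ltW cc')) //.
    by move=> _ [x ->]; rewrite TE.
  by move=> _ [x ->]; rewrite TE.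
Qed.

End Span.

End FiniteDimension.

Section FreeSpaceFamilies.
Variables (R : realType) (X : Type) (dX : X -> X -> R) (x0 : X).
Hypothesis hX : is_metric dX.

Local Notation V := ((X -> R) -> R^o).
Local Notation N := (dual_norm dX x0).

Lemma dual_norm_lfree_lower m (b : 'I_m -> V) :
  (forall k, lip0_dual dX x0 (b k)) -> lfree b ->
  exists K, 0 < K /\ forall a, \sum_k `|a k| <= K * N (\sum_k a k *: b k).
Proof.
move=> db free_b; have bb k := lip0_dual_bounded (db k).
pose F (v : 'rV[R]_m) := N (\sum_k v ord0 k *: b k).
have bF (v : 'rV[R]_m) := dual_bounded_sum (v ord0) bb.
have FL v w : `|F v - F w| <= (\sum_k N (b k)) * `|v - w|.
  apply: le_trans (ler_dist_dual_norm hX (bF v) (bF w)) _.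
  rewrite -sumrB (eq_bigr (fun k => (v - w) ord0 k *: b k)); last first.
    by move=> k _; rewrite !mxE scalerBl.
  apply: le_trans (ler_dual_norm_sum hX _ bb) _.
  rewrite mulr_suml; apply: ler_sum => k _; rewrite mulrC.
  by rewrite ler_wpM2l ?dual_norm_ge0 ?rV_coef_le_norm.
have FZ t v : F (t *: v) = `|t| * F v.
  rewrite /F -dual_normZ // scaler_sumr; congr N.
  by apply: eq_bigr => k _; rewrite mxE scalerA.
have F0 v : 0 <= F v by apply: dual_norm_ge0.
have Fdef v : F v = 0 -> v = 0.
  move=> /(dual_norm_eq0 hX (lip0_dual_sum _ db)) /free_b v0.
  by apply/rowP => k; rewrite mxE v0.
have [K [K0 vK]] := rV_norm_le_mul_norm FL FZ F0 Fdef.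
exists (m.+1%:R * K); split => [|a]; first by rewrite mulr_gt0.
pose v := \row_k a k.
have -> : \sum_k a k *: b k = \sum_k v ord0 k *: b k.
  by apply: eq_bigr => k _; rewrite mxE.
apply: (@le_trans _ _ (`|v| *+ m.+1)).
  rewrite mulrSr -[m in _ *+ m]card_ord -sumr_const ler_wpDr //.
  by apply: ler_sum => k _; have := rV_coef_le_norm v k; rewrite mxE.
by rewrite -mulrA -[leLHS]mulr_natl; apply: ler_wpM2l.
Qed.

Lemma free_space_molecule_approx m (b : 'I_m -> V) (e : R) :
  (forall k, free_space dX x0 (b k)) -> 0 < e ->
  exists (r : 'I_m -> nat) (c : forall k, 'I_(r k) -> R)
         (x : forall k, 'I_(r k) -> X),
    forall k, N (b k - molecule dX x0 (c k) (x k)) < e.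
Proof.
move=> fb e0.
have /choice [z bz] : forall k, exists z : {r : nat & (('I_r -> R) * ('I_r -> X))%type},
    N (b k - molecule dX x0 (tagged z).1 (tagged z).2) < e.
  move=> k; have [_ /(_ e e0) [_ [[n [c [x ->]]] bk]]] := fb k.
  by exists (existT _ n (c, x)).
by exists (fun k => tag (z k)), (fun k => (tagged (z k)).1), (fun k => (tagged (z k)).2).
Qed.

End FreeSpaceFamilies.

Lemma small_distortion_param (R : realType) (eps : R) : 0 < eps ->
  exists s : R, [/\ 0 < s, s < 1 & (1 + s) ^+ 2 * ((1 + s) / (1 - s)) <= 1 + eps].
Proof.
move=> eps0; exists (Num.min (1 / 2) (eps / 16)).
set s := Num.min _ _.
have s_half : s <= 1 / 2 by rewrite ge_min lexx.
have s_eps : s <= eps / 16 by rewrite ge_min lexx orbT.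
have s0 : 0 < s by rewrite lt_min; apply/andP; split; [|rewrite divr_gt0]; lra.
split; [by [] | lra |].
rewrite mulrA ler_pdivrMr; last lra.
have : s * s <= s by nra.
have : s * s * s <= s by nra.
have : eps * s <= eps / 2 by nra.
by rewrite expr2; nra.
Qed.

Section UltrapowerFamilies.
Variables (R : realType) (M : Type) (d : M -> M -> R) (m0 : M).
Hypothesis hd : is_metric d.
Variables (I : Type) (U : set (set I)).
Hypothesis hU : is_ultrafilter U.

Local Notation UP := (@ultrapower R M d m0 I U).
Local Notation ud := (@udist R M d m0 I U).
Local Notation ub := (@ubase R M d m0 I U).
Local Notation NU := (dual_norm ud ub).
Local Notation NM := (dual_norm d m0).

Let hud : is_metric ud := udist_metric m0 hd hU.

(* Approximate each [b k] by a molecule to within [s] relative to the whole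
   span, then read all the finitely many atoms in one almost isometric
   coordinate [ucoord i]. *)
Lemma ultrapower_lfree_almost_isometric m (b : 'I_m -> (UP -> R) -> R^o) (s : R) :
  (forall k, free_space ud ub (b k)) -> lfree b -> 0 < s ->
  exists Phi : 'I_m -> (M -> R) -> R^o, (forall k, free_space d m0 (Phi k)) /\
    forall a, NM (\sum_k a k *: Phi k) <= (1 + s) ^+ 2 * NU (\sum_k a k *: b k) /\
              (1 - s) * NU (\sum_k a k *: b k) <= (1 + s) * NM (\sum_k a k *: Phi k).
Proof.
move=> fb free_b s0.
have db k : lip0_dual ud ub (b k) by case: (fb k).
have [K [K0 bK]] := dual_norm_lfree_lower hud db free_b.
have [r [c [x bx]]] := free_space_molecule_approx fb (divr_gt0 s0 K0).
pose P (o : option {k : 'I_m & 'I_(r k)}) := if o is Some t then x (tag t) (tagged t) else ub.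
have [i Pi] := ucoord_almost_isometry hd hU P s0.
pose g := @ucoord R M d m0 I U i.
pose Phi k := molecule d m0 (c k) (g \o x k).
exists Phi; split => [k|a]; first exact: molecule_free.
pose psi k := molecule ud ub (c k) (x k).
have T1 : NM (\sum_k a k *: Phi k) <= (1 + s) * NU (\sum_k a k *: psi k).
  rewrite !molecule_sum; apply: (molecule_transfer hud hd (P := P) (Q := g \o P)) => //.
  - exact: ucoord_base.
  - by rewrite ltr_pwDr.
  - by move=> o o'; case: (Pi o o').
have T2 : NU (\sum_k a k *: psi k) <= (1 + s) * NM (\sum_k a k *: Phi k).
  rewrite !molecule_sum; apply: (molecule_transfer hd hud (P := g \o P) (Q := P)) => //.
  - exact: ucoord_base.
  - by rewrite ltr_pwDr.
  - by move=> o o'; case: (Pi o o').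
have bb := dual_bounded_sum a (fun k => lip0_dual_bounded (db k)).
have bpsi := dual_bounded_sum a (fun k => molecule_bounded ud ub (c k) (x k)).
have b_psi : NU (\sum_k a k *: b k - \sum_k a k *: psi k) <= s * NU (\sum_k a k *: b k).
  apply: le_trans (dual_norm_sum_perturb hud _ (fun k => lip0_dual_bounded (db k))
    (fun k => molecule_bounded ud ub (c k) (x k)) (fun k => ltW (bx k))) _.
  by rewrite -mulrA; apply: ler_wpM2l; [exact: ltW | rewrite ler_pdivrMl].
have := ler_dist_dual_norm hud bb bpsi; rewrite ler_norml => /andP[? ?].
split; last by apply: le_trans T2; lra.
by apply: le_trans T1 _; rewrite expr2 -mulrA ler_wpM2l; lra.
Qed.

End UltrapowerFamilies.

Theorem theorem4p1 (R : realType) (M : Type) (d : M -> M -> R) (m0 : M)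
  (hd : is_metric d) (I : Type) (U : set (set I)) (hU : is_ultrafilter U) :
  fin_rep
    (@free_space R (@ultrapower R M d m0 I U) (@udist R M d m0 I U) (@ubase R M d m0 I U))
    (@dual_norm R (@ultrapower R M d m0 I U) (@udist R M d m0 I U) (@ubase R M d m0 I U))
    (@free_space R M d m0) (@dual_norm R M d m0).
Proof.
move=> E [n [e [Xe ->]]] eps eps0.
have [m [b [fb -> free_b]]] := lspan_basis Xe.
have [s [s0 s1 s_eps]] := small_distortion_param eps0.
have [Phi [fPhi Phi_b]] := ultrapower_lfree_almost_isometric hd hU fb free_b s0.
have hud := udist_metric m0 hd hU.
exists (lspan Phi); split; first by exists m, Phi.
apply: (bm_dist_le_lspan free_b (dual_norm0 m0 hd) _ _ _ s_eps) => [_ [a ->] Nle0|||a|a].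
- have db k := proj1 (fb k).
  apply: (dual_norm_eq0 hud (lip0_dual_sum a db)); apply: le_anti; rewrite Nle0.
  exact/dual_norm_ge0/lip0_dual_bounded/lip0_dual_sum.
- by rewrite sqr_ge0.
- by rewrite divr_ge0 //; lra.
- by case: (Phi_b a).
- by rewrite mulrAC ler_pdivlMr ?subr_gt0 // mulrC; case: (Phi_b a).
Qed.
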